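(* Let $A\in\{\mathbb Z,\mathbb R\}$ and let $X\subset\mathbb R^d$ be bounded. Then $\mathrm{Flt}_d^A(X)=\sup\{\mathrm{width}(K): K\subset\mathbb R^d \text{ is an } A\text{-}X\text{-free convex body}\}$.
   Context: A convex body in $\mathbb R^d$ is a nonempty compact convex subset of $\mathbb R^d$. An $A$-unimodular transformation is a map $T:\mathbb R^d\to\mathbb R^d$, $T(x)=Mx+b$ with $M\in \mathrm{GL}_d(\mathbb Z)$ and $b\in A^d$; an $A$-unimodular copy of $X\subset\mathbb R^d$ is a set $T(X)$ for such a $T$. For $u\in(\mathbb Z^d)^*$ (extended linearly to $\mathbb R^d$), $\mathrm{width}_u(K)=\sup_{x,y\in K}|u(x)-u(y)|$ and $\mathrm{width}(K)=\inf_{u\in(\mathbb Z^d)^*\setminus\{0\}}\mathrm{width}_u(K)$. $\mathrm{Flt}_d^A(X)=\sup\{\mathrm{width}(K): K\subset\mathbb R^d \text{ a convex body containing no } A\text{-unimodular copy of } X\}$. A convex set $K$ is $A$-$X$-free if its relative interior contains no $A$-unimodular copy of $X$ (the relative interior of a single point is that point). *)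

From HB Require Import structures.
From mathcomp Require Import all_boot all_order all_algebra.
From mathcomp Require Import all_classical all_reals all_analysis.
Set Implicit Arguments. Unset Strict Implicit. Unset Printing Implicit Defensive.
Import Order.TTheory GRing.Theory Num.Theory.
Import numFieldNormedType.Exports.
Local Open Scope classical_set_scope.
Local Open Scope ring_scope.

Inductive coeffA := AZ | AR.

Definition inA {R : realType} (A : coeffA) (x : R) : Prop :=
  match A with AZ => exists z : int, x = z%:~R | AR => True end.

Section Defs.
Variables (R : realType) (d : nat).
Notation pt := 'rV[R]_d.

Definition GLZ (M : 'M[int]_d) : Prop := M \in unitmx.

(* A-unimodular transformation x |-> x M + b (row-vector convention;
   GL_d(Z) is closed under transposition). *)
Definition unimod_map (A : coeffA) (T : pt -> pt) : Prop :=
  exists (M : 'M[int]_d) (b : pt),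
    GLZ M /\ (forall i, inA A (b 0 i)) /\
    forall x, T x = x *m map_mx (fun z : int => z%:~R) M + b.

Definition contains_copy (A : coeffA) (X K : set pt) : Prop :=
  exists T, unimod_map A T /\ T @` X `<=` K.

Definition convex_set (K : set pt) : Prop :=
  forall x y (t : R), K x -> K y -> 0 <= t <= 1 -> K ((1 - t) *: x + t *: y).

Definition convex_body (K : set pt) : Prop :=
  K !=set0 /\ compact K /\ convex_set K.

Definition aff_hull (K : set pt) : set pt :=
  [set y | exists (n : nat) (p : 'I_n -> pt) (c : 'I_n -> R),
     (forall i, K (p i)) /\ \sum_(i < n) c i = 1 /\ y = \sum_(i < n) c i *: p i].

Definition rel_interior (K : set pt) : set pt :=
  [set x | K x /\ exists e : R, 0 < e /\
     forall y, aff_hull K y -> ball x e y -> K y].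

Definition AX_free (A : coeffA) (X K : set pt) : Prop :=
  convex_set K /\ ~ contains_copy A X (rel_interior K).

Definition lin_int (u : 'rV[int]_d) (x : pt) : R :=
  \sum_(i < d) (u 0 i)%:~R * x 0 i.

Definition width_u (u : 'rV[int]_d) (K : set pt) : \bar R :=
  ereal_sup [set (`|lin_int u x - lin_int u y|)%:E | x in K & y in K].

Definition width (K : set pt) : \bar R :=
  ereal_inf [set width_u u K | u in [set u : 'rV[int]_d | u != 0]].

Definition Flt (A : coeffA) (X : set pt) : \bar R :=
  ereal_sup [set width K | K in [set K | convex_body K /\ ~ contains_copy A X K]].

End Defs.

(* Every convex body without an A-unimodular copy of X is X-free, which gives
   one inequality.  Conversely, a nonempty convex set K contains a point c
   around which it contains a ball of its affine hull, so contracting K towards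
   c by a factor t < 1 lands in the relative interior of K.  If K is X-free, the
   contracted body is thus a convex body without a copy of X, of width at least
   t * width K; letting t tend to 1 gives width K <= Flt. *)

From Pilot Require Import Defs.
From HB Require Import structures.
From mathcomp Require Import all_boot all_order all_algebra.
From mathcomp Require Import all_classical all_reals all_analysis.
From mathcomp Require Import ring lra zify.
Set Implicit Arguments. Unset Strict Implicit. Unset Printing Implicit Defensive.
Import Order.TTheory GRing.Theory Num.Theory.
Import numFieldNormedType.Exports.
Local Open Scope classical_set_scope.
Local Open Scope ring_scope.

Lemma ler_mx_norm_entry (R : realDomainType) m n (A : 'M[R]_(m, n)) i j :
  `|A i j| <= `|A|.
Proof.
have -> : `|A| = mx_norm A by [].
by rewrite mx_normrE (le_bigmax _ (fun ij : 'I_m * 'I_n => `|A ij.1 ij.2|) (i, j)).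
Qed.

Lemma mulmx_entry_bound (R : realDomainType) m n (P : 'M[R]_(m, n)) :
  exists2 C : R, 0 < C & forall (w : 'rV_m) j, `|(w *m P) 0 j| <= C * `|w|.
Proof.
exists (1 + \sum_i \sum_j `|P i j|).
  by rewrite ltr_pwDl // sumr_ge0 // => i _; rewrite sumr_ge0.
move=> w j; rewrite mxE (le_trans (ler_norm_sum _ _ _)) //.
apply: (@le_trans _ _ (\sum_i `|w| * `|P i j|)).
  by apply: ler_sum => i _; rewrite normrM ler_wpM2r ?ler_mx_norm_entry.
rewrite -mulr_sumr mulrC ler_wpM2r // ler_wpDl //.
apply: ler_sum => i _; rewrite (bigD1 j) //= lerDl.
by rewrite sumr_ge0.
Qed.

Lemma rank_col_mx_gt (F : fieldType) m n (V : 'M[F]_(m, n)) (v : 'rV_n) :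
  ~~ (v <= V)%MS -> (\rank V < \rank (col_mx V v))%N.
Proof.
move=> vV; apply: rank_ltmx; rewrite ltmxE -addsmxE addsmxSl /=.
by apply: contra vV; rewrite col_mx_sub => /andP[].
Qed.

Section RelativeInterior.
Variables (R : realType) (d : nat).
Notation pt := 'rV[R]_d.
Implicit Types (K : set pt) (x y c : pt).

Lemma convex_subconvex_comb K x0 n (a : 'I_n -> R) (v : 'I_n -> pt) :
  Defs.convex_set K -> K x0 -> (forall i, 0 <= a i) -> (forall i, K (x0 + v i)) ->
  \sum_i a i <= 1 -> K (x0 + \sum_i a i *: v i).
Proof.
move=> cK Kx0; elim: n a v => [|n IH] a v a_ge0 Kv; first by rewrite !big_ord0 addr0.
rewrite !big_ord_recr /=; set t := a ord_max => suma.
set a' := fun i : 'I_n => a (widen_ord (leqnSn n) i).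
set v' := fun i : 'I_n => v (widen_ord (leqnSn n) i).
have a'_ge0 i : 0 <= a' i by exact: a_ge0.
have suma'_ge0 : 0 <= \sum_i a' i by rewrite sumr_ge0.
have [t_lt1|t_ge1] := ltrP t 1; last first.
  have -> : \sum_i a' i *: v' i = 0.
    apply: big1 => i _; rewrite (psumr_eq0P _ (_ : \sum_i a' i = 0)) ?scale0r //.
    by rewrite /a'; lra.
  by rewrite add0r (_ : t = 1) ?scale1r //; lra.
have t_gt0 : 0 < 1 - t by rewrite subr_gt0.
have Kw : K (x0 + \sum_i (a' i / (1 - t)) *: v' i).
  apply: IH => [i|i|]; first by rewrite divr_ge0 // ltW.
    exact: Kv.
  by rewrite -mulr_suml ler_pdivrMr // mul1r lerBrDr.
have := cK _ _ t Kw (Kv ord_max); rewrite a_ge0 ltW //= => /(_ isT).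
congr K; rewrite !scalerDr scaler_sumr addrACA -scalerDl subrK scale1r.
congr (_ + (_ + _)); apply: eq_bigr => i _.
by rewrite scalerA mulrCA mulfV ?mulr1 // gt_eqF.
Qed.

Lemma exists_spanning_family K x0 :
  exists n (V : 'M[R]_(n, d)),
    (forall i, K (x0 + row i V)) /\ forall x, K x -> (x - x0 <= V)%MS.
Proof.
suff: forall m n (V : 'M[R]_(n, d)), (forall i, K (x0 + row i V)) ->
    (d - \rank V <= m)%N -> exists n' (V' : 'M[R]_(n', d)),
    (forall i, K (x0 + row i V')) /\ forall x, K x -> (x - x0 <= V')%MS.
  by move/(_ d 0%N 0); apply=> [[]|]; rewrite ?leq_subr.
elim=> [|m IH] n V KV corank.
all: have [spans|] := pselect (forall x, K x -> (x - x0 <= V)%MS);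
  first by exists n, V.
all: move=> /existsNP [x /not_implyP [Kx /negP xV]].
all: set W := col_mx V (x - x0).
all: have rankW : (\rank V < \rank W)%N by exact: rank_col_mx_gt.
all: have rankW_le : (\rank W <= d)%N by exact: rank_leq_col.
  by exfalso; lia.
apply: (IH _ W); last by lia.
move=> i; rewrite -(splitK i); case: (fintype.split i) => j /=.
  by rewrite rowKu.
by rewrite rowKd row_id addrC subrK.
Qed.

Lemma exists_relative_ball K x0 n (V : 'M[R]_(n, d)) :
  Defs.convex_set K -> K x0 -> (forall i, K (x0 + row i V)) ->
  exists c e, [/\ 0 < e, (c - x0 <= V)%MS &
    forall y, (y - x0 <= V)%MS -> `|c - y| < e -> K y].
Proof.
(* c has all coordinates 1/(n+1) on the rows of V; nearby points of the span
   have coordinates within 1/(n+1)^2 of these, hence nonnegative with sum <= 1. *)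
move=> cK Kx0 KV.
set x : R := n.+1%:R^-1.
have x_gt0 : 0 < x by rewrite invr_gt0 ltr0n.
have x_le1 : x <= 1 by rewrite invf_le1 ?ltr0n ?ler1n.
have nx : n%:R * x = 1 - x.
  have : n.+1%:R * x = 1 by rewrite mulfV ?pnatr_eq0.
  by rewrite mulrSr; lra.
have [C C_gt0 PC] := mulmx_entry_bound (pinvmx V).
set e1 : 'rV[R]_n := const_mx x.
set c := x0 + e1 *m V.
have cV : (c - x0 <= V)%MS by rewrite addrAC subrr add0r submxMl.
exists c, (x * x / C); split => [|//|y yV cy]; first by rewrite divr_gt0 ?mulr_gt0.
have ycV : (y - c <= V)%MS.
  have -> : y - c = (y - x0) - (c - x0) by rewrite opprB addrA subrK.
  by rewrite addmx_sub ?eqmx_opp.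
set a := (y - c) *m pinvmx V + e1.
have ya : y = x0 + a *m V.
  rewrite /a mulmxDl mulmxKpV // /c.
  by apply/rowP => j; rewrite !mxE; ring.
have a_near j : `|a 0 j - x| <= x * x.
  rewrite /a mxE [e1 0 j]mxE addrK (le_trans (PC _ j)) // mulrC -ler_pdivlMr //.
  by rewrite distrC ltW.
have a_ge0 j : 0 <= a 0 j.
  by move: (a_near j); rewrite ler_distl => /andP[+ _]; apply: le_trans; nra.
have suma : \sum_j a 0 j <= 1.
  apply: (@le_trans _ _ (\sum_(j < n) (x + x * x))).
    by apply: ler_sum => j _; move: (a_near j); rewrite ler_distl => /andP[].
  rewrite sumr_const card_ord -mulr_natl.
  have -> : n%:R * (x + x * x) = (1 - x) * (1 + x) by rewrite -nx; ring.
  nra.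
by rewrite ya mulmx_sum_row; apply: convex_subconvex_comb.
Qed.

Lemma aff_hull_sub_span K x0 m (V : 'M[R]_(m, d)) :
  (forall x, K x -> (x - x0 <= V)%MS) -> forall y, aff_hull K y -> (y - x0 <= V)%MS.
Proof.
move=> KV y [n [p [c [Kp [sumc1 ->]]]]].
have -> : \sum_i c i *: p i - x0 = \sum_i c i *: (p i - x0).
  rewrite -{1}[x0]scale1r -sumc1 scaler_suml -sumrB.
  by apply: eq_bigr => i _; rewrite scalerBr.
by apply: summx_sub => i _; rewrite scalemx_sub ?KV.
Qed.

Definition homothety c (t : R) x : pt := t *: x + (1 - t) *: c.

Lemma homothety_rel_interior K x0 m (V : 'M[R]_(m, d)) c e t x :
  Defs.convex_set K -> (forall x, K x -> (x - x0 <= V)%MS) -> 0 < e ->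
  (c - x0 <= V)%MS -> (forall y, (y - x0 <= V)%MS -> `|c - y| < e -> K y) ->
  0 < t < 1 -> K x -> rel_interior K (homothety c t x).
Proof.
move=> cK KV e_gt0 cV ball_c /andP[t_gt0 t_lt1] Kx.
have Kc : K c by apply: ball_c; rewrite ?subrr ?normr0.
have t01 : 0 <= t <= 1 by rewrite !ltW.
have t'_gt0 : 0 < 1 - t by rewrite subr_gt0.
split; first by rewrite /homothety addrC; apply: cK.
exists ((1 - t) * e); split => [|y /(aff_hull_sub_span KV) yV]; first exact: mulr_gt0.
rewrite -ball_normE /ball_ /= distrC => zy.
set z := homothety c t x; set w := c + (1 - t)^-1 *: (y - z).
have -> : y = (1 - t) *: w + t *: x by apply/rowP => j; rewrite !mxE; field; rewrite gt_eqF.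
apply: cK => //; apply: ball_c.
  have -> : w - x0 = (c - x0) +
      (1 - t)^-1 *: ((y - x0) - (t *: (x - x0) + (1 - t) *: (c - x0))).
    by apply/rowP => j; rewrite !mxE; ring.
  apply: addmx_sub cV _; apply: scalemx_sub; apply: addmx_sub yV _.
  by rewrite eqmx_opp addmx_sub ?scalemx_sub ?KV.
rewrite opprD addNKr normrN normrZ ger0_norm ?invr_ge0 ?ltW //.
by rewrite mulrC ltr_pdivrMr // mulrC.
Qed.

Lemma exists_center_rel_interior K : Defs.convex_set K -> K !=set0 ->
  exists c, forall t, 0 < t < 1 -> homothety c t @` K `<=` rel_interior K.
Proof.
move=> cK [x0 Kx0].
have [n [V [KV spanV]]] := exists_spanning_family K x0.
have [c [e [e_gt0 cV ball_c]]] := exists_relative_ball cK Kx0 KV.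
by exists c => t t01 _ [x Kx <-]; apply: (homothety_rel_interior cK spanV e_gt0 cV ball_c).
Qed.

Lemma lin_intDZ (u : 'rV[int]_d) a b x y :
  lin_int u (a *: x + b *: y) = a * lin_int u x + b * lin_int u y.
Proof.
rewrite /lin_int !mulr_sumr -big_split; apply: eq_bigr => i _.
by rewrite !mxE mulrDr; congr (_ + _); rewrite mulrCA.
Qed.

Lemma width_ge0 K : K !=set0 -> (0 <= width K)%E.
Proof.
move=> [x Kx]; apply: le_ereal_inf_tmp => _ [u _ <-]; apply: ereal_sup_ubound.
by exists x => //; exists x => //; rewrite subrr normr0.
Qed.

Lemma width_homothety c t K :
  0 < t -> (t%:E * width K <= width (homothety c t @` K))%E.
Proof.
move=> t_gt0; apply: le_ereal_inf_tmp => _ [u u_neq0 <-].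
apply: (@le_trans _ _ (t%:E * width_u u K)%E).
  apply: lee_wpmul2l; first by rewrite lee_fin ltW.
  by apply: ereal_inf_lbound; exists u.
rewrite /width_u -ereal_sup_pZl //.
apply: le_ereal_sup => _ [_ [x Kx [y Ky <-]] <-].
exists (homothety c t x); first by exists x.
exists (homothety c t y); first by exists y.
have -> : lin_int u (homothety c t x) - lin_int u (homothety c t y) =
    t * (lin_int u x - lin_int u y) by rewrite !lin_intDZ; ring.
by rewrite normrM ger0_norm ?ltW.
Qed.

Lemma convex_body_homothety c t K :
  convex_body K -> convex_body (homothety c t @` K).
Proof.
move=> [[x Kx] [Kcompact cK]]; split; first by exists (homothety c t x), x.
split.
  apply: continuous_compact => //; apply: continuous_subspaceT => y.
  by apply: continuousD; [apply: continuousZl_tmp | apply: cst_continuous].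
move=> _ _ s [x1 Kx1 <-] [x2 Kx2 <-] s01.
exists ((1 - s) *: x1 + s *: x2); first exact: cK.
by apply/rowP => j; rewrite !mxE; ring.
Qed.

Lemma width_le_Flt A X K : convex_body K -> AX_free A X K -> (width K <= Flt A X)%E.
Proof.
move=> Kbody [_ Kfree]; have [K_neq0 [_ cK]] := Kbody.
have [c c_rel] := exists_center_rel_interior cK K_neq0.
apply/lee_mul01Pr; first exact: width_ge0.
move=> t /andP[t_gt0 t_lt1].
apply: le_trans (width_homothety c K t_gt0) _.
apply: ereal_sup_ubound; exists (homothety c t @` K) => //.
split; first exact: convex_body_homothety.
move=> [T [Tunimod TX]]; apply: Kfree; exists T; split => //.
by apply: subset_trans TX _; apply: c_rel; rewrite t_gt0.
Qed.

Lemma AX_free_of_no_copy A X K :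
  Defs.convex_set K -> ~ contains_copy A X K -> AX_free A X K.
Proof.
move=> cK Kfree; split => // -[T [Tunimod TX]]; apply: Kfree; exists T; split => //.
by apply: subset_trans TX _ => x [].
Qed.

End RelativeInterior.

Theorem lemma2p2 (R : realType) (d : nat) (A : coeffA) (X : set 'rV[R]_d) :
  bounded_set X ->
  Flt A X =
  ereal_sup [set width K | K in [set K : set 'rV[R]_d | convex_body K /\ AX_free A X K]].
Proof.
move=> _; apply/eqP; rewrite eq_le; apply/andP; split.
  apply: le_ereal_sup => _ [K [Kbody Kfree] <-]; exists K => //; split => //.
  by apply: AX_free_of_no_copy => //; case: Kbody => _ [].
by apply: ge_ereal_sup => _ [K [Kbody Kfree] <-]; apply: width_le_Flt.
Qed.
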